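(* Let $d\ge1$, $n\ge3$, $u\in\mathbb{C}\setminus\{0\}$. The algebra $\mathrm{FTL}_{d,n}(u)$ is the algebra generated by $t_1,\ldots,t_n,g_1,\ldots,g_{n-1}$ subject to the defining relations of $\mathrm{Y}_{d,n}(u)$ together with the single relation $r_{1,2}=0$.
   Context: The Yokonuma–Hecke algebra $\mathrm{Y}_{d,n}(u)$ is the unital associative $\mathbb{C}$-algebra with generators $g_1,\ldots,g_{n-1},t_1,\ldots,t_n$ and relations: $g_ig_j=g_jg_i$ for $|i-j|>1$; $g_{i+1}g_ig_{i+1}=g_ig_{i+1}g_i$; $t_it_j=t_jt_i$; $t_i^d=1$; $g_it_i=t_{i+1}g_i$; $g_it_{i+1}=t_ig_i$; $g_it_j=t_jg_i$ for $j\ne i,i+1$; $g_i^2=1+(u-1)e_i+(u-1)e_ig_i$, where $e_i=\frac1d\sum_{s=0}^{d-1}t_i^st_{i+1}^{d-s}$. For $w\in S_n$ with reduced expression $s_{i_1}\cdots s_{i_k}$ put $g_w=g_{i_1}\cdots g_{i_k}$; $g_{i,i+1}=\sum_{w\in\langle s_i,s_{i+1}\rangle}g_w$ and $r_{i,i+1}=\sum_{a,b=0}^{d-1}t_i^{a}t_{i+1}^{b-a}t_{i+2}^{-b}\,g_{i,i+1}$. $\mathrm{FTL}_{d,n}(u)$ is defined as the quotient of $\mathrm{Y}_{d,n}(u)$ by the two-sided ideal generated by all $r_{i,i+1}$, $1\le i\le n-2$. *)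

From HB Require Import structures.
From mathcomp Require Import all_boot all_order all_algebra.
From mathcomp Require Import complex.
From mathcomp Require Import Rstruct.
Set Implicit Arguments. Unset Strict Implicit. Unset Printing Implicit Defensive.
Import Order.TTheory GRing.Theory Num.Theory.
Local Open Scope ring_scope.

Definition CC : Type := complex Rdefinitions.R.

Section YH.
Variable F : fieldType.
Variable A : algType F.
Variables (d n : nat) (u : F) (g t : nat -> A).

Definition yh_e (i : nat) : A :=
  (d%:R)^-1 *: \sum_(s < d) (t i ^+ s * t i.+1 ^+ (d - s)).

(* g_{i,i+1} = sum of g_w, w in <s_i, s_{i+1}> = S_3 (reduced expressions) *)
Definition yh_gblock (i : nat) : A :=
  1 + g i + g i.+1 + g i * g i.+1 + g i.+1 * g i + g i * g i.+1 * g i.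

(* r_{i,i+1} = sum_{a,b=0}^{d-1} t_i^a t_{i+1}^{b-a} t_{i+2}^{-b} g_{i,i+1};
   since t_j^d = 1, t^{b-a} = t^(b + (d - a)) and t^{-b} = t^(d - b). *)
Definition yh_r (i : nat) : A :=
  \sum_(a < d) \sum_(b < d)
     (t i ^+ a * t i.+1 ^+ (b + (d - a)) * t i.+2 ^+ (d - b) * yh_gblock i).

Definition YH_relations : Prop :=
  [/\ (forall i j, (1 <= i <= n.-1)%N -> (1 <= j <= n.-1)%N ->
         (i.+1 < j \/ j.+1 < i)%N -> g i * g j = g j * g i),
      (forall i, (1 <= i <= n - 2)%N -> g i.+1 * g i * g i.+1 = g i * g i.+1 * g i),
      (forall i j, (1 <= i <= n)%N -> (1 <= j <= n)%N -> t i * t j = t j * t i),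
      (forall i, (1 <= i <= n)%N -> t i ^+ d = 1)
    & [/\ (forall i, (1 <= i <= n.-1)%N -> g i * t i = t i.+1 * g i),
          (forall i, (1 <= i <= n.-1)%N -> g i * t i.+1 = t i * g i),
          (forall i j, (1 <= i <= n.-1)%N -> (1 <= j <= n)%N -> j != i -> j != i.+1 ->
             g i * t j = t j * g i)
        & (forall i, (1 <= i <= n.-1)%N ->
             g i ^+ 2 = 1 + (u - 1) *: yh_e i + (u - 1) *: (yh_e i * g i))]].
End YH.

From HB Require Import structures.
From mathcomp Require Import all_boot all_order all_algebra.
From mathcomp Require Import complex.
From mathcomp Require Import Rstruct.
From mathcomp Require Import zify ring.
Set Implicit Arguments. Unset Strict Implicit. Unset Printing Implicit Defensive.
Import GRing.Theory Num.Theory.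
Local Open Scope ring_scope.

(* Conjugation by [g_(i+2) g_(i+1) g_i] shifts the indices of [g_i, g_(i+1)]
   and of [t_i, t_(i+1), t_(i+2)] up by one, so it carries [r_(i,i+1)] to
   [r_(i+1,i+2)].  Every [g_j] is invertible because [e_j] is an idempotent
   and [g_j^2 = 1 + (u - 1) e_j (1 + g_j)], so [r_(1,2) = 0] forces all the
   other [r_(i,i+1)] to vanish by induction on [i]. *)

Section Intertwining.
Variables (R : pzRingType) (D : R).

Definition intertwines (x y : R) := x * D = D * y.

Lemma intertwines1 : intertwines 1 1.
Proof. by rewrite /intertwines mul1r mulr1. Qed.

Lemma intertwinesD x1 x2 y1 y2 :
  intertwines x1 y1 -> intertwines x2 y2 -> intertwines (x1 + x2) (y1 + y2).
Proof. by rewrite /intertwines mulrDl mulrDr => -> ->. Qed.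

Lemma intertwinesM x1 x2 y1 y2 :
  intertwines x1 y1 -> intertwines x2 y2 -> intertwines (x1 * x2) (y1 * y2).
Proof. by rewrite /intertwines => h1 h2; rewrite -mulrA h2 mulrA h1 mulrA. Qed.

Lemma intertwinesX x y k : intertwines x y -> intertwines (x ^+ k) (y ^+ k).
Proof.
move=> hxy; elim: k => [|k IHk]; first exact: intertwines1.
by rewrite !exprS; apply: intertwinesM.
Qed.

Lemma intertwines_sum (I : Type) (r : seq I) (P : pred I) (F G : I -> R) :
  (forall i, P i -> intertwines (F i) (G i)) ->
  intertwines (\sum_(i <- r | P i) F i) (\sum_(i <- r | P i) G i).
Proof.
apply: (big_ind2 intertwines) => [|x1 y1 x2 y2]; last exact: intertwinesD.
by rewrite /intertwines mul0r mulr0.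
Qed.

End Intertwining.

Section Averaging.
Variables (F : fieldType) (A : algType F) (d : nat).
Hypothesis d_neq0 : d%:R != 0 :> F.

Lemma pow_average_idem (x : A) : x ^+ d = 1 ->
  let e := d%:R^-1 *: \sum_(s < d) x ^+ s in e * e = e.
Proof.
move=> xd /=; set S := \sum_(s < d) x ^+ s.
have d_gt0 : (0 < d)%N by case: d d_neq0 => //; rewrite eqxx.
have xS : x * S = S.
  rewrite /S mulr_sumr; case: d d_gt0 xd => // d' _ xd.
  rewrite big_ord_recr big_ord_recl /= -exprS xd addrC; congr (_ + _).
  by apply: eq_bigr => s _; rewrite -exprS.
have SS : S * S = S *+ d.
  have xkS k : x ^+ k * S = S by elim: k => [|k IHk]; rewrite ?mul1r // exprSr -mulrA xS.
  by rewrite {1}/S mulr_suml (eq_bigr (fun=> S)) ?sumr_const ?card_ord // => s _.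
by rewrite -scalerAl -scalerAr SS -scaler_nat !scalerA divfK.
Qed.

Lemma yh_e_idem (t : nat -> A) j :
  t j * t j.+1 = t j.+1 * t j -> t j ^+ d = 1 -> t j.+1 ^+ d = 1 ->
  yh_e d t j * yh_e d t j = yh_e d t j.
Proof.
move=> tC tjd tj1d; set x := t j * t j.+1 ^+ d.-1.
have xX k : x ^+ k = t j ^+ k * t j.+1 ^+ (d.-1 * k).
  by rewrite exprMn_comm ?exprM //; apply: commrX.
have geometric (s : 'I_d) : t j ^+ s * t j.+1 ^+ (d - s) = x ^+ s.
  case: s => [[|s] /= s_lt]; first by rewrite subn0 tj1d mulr1 expr0.
  rewrite xX; have -> : (d.-1 * s.+1 = (d - s.+1) + d * s)%N by lia.
  by rewrite exprD exprM tj1d expr1n mulr1.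
have xd : x ^+ d = 1.
  by rewrite xX tjd mul1r mulnC exprM tj1d expr1n.
rewrite /yh_e (eq_bigr _ (fun s _ => geometric s)).
exact: pow_average_idem.
Qed.

End Averaging.

(* With [v := e + e g] one has [v g = u v], so the product below is
   [1 + ((u - 1) + (u^-1 - 1) u) v = 1]. *)
Lemma quadratic_left_inv (F : fieldType) (A : algType F) (u : F) (e g : A) :
  u != 0 -> e * e = e ->
  g ^+ 2 = 1 + (u - 1) *: e + (u - 1) *: (e * g) ->
  (g + (u^-1 - 1) *: (e + e * g)) * g = 1.
Proof.
move=> u_neq0 ee; rewrite -addrA -scalerDr; set v := e + e * g => gg.
have ev : e * v = v by rewrite /v mulrDr mulrA ee.
have vg : v * g = u *: v.
  rewrite {1}/v mulrDl -mulrA -expr2 gg mulrDr mulr1 -scalerAr ev.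
  by rewrite addrA [e * g + e]addrC -/v -{1}(scale1r v) -scalerDl addrC subrK.
have coef0 : u - 1 + (u^-1 - 1) * u = 0 by field.
by rewrite mulrDl -scalerAl vg scalerA -expr2 gg -addrA -scalerDl coef0 scale0r addr0.
Qed.

Definition braid_shift (R : pzRingType) (g : nat -> R) i := g i.+2 * g i.+1 * g i.

Lemma yh_r_intertwines (F : fieldType) (A : algType F) d (g t : nat -> A) i D :
  intertwines D (g i) (g i.+1) -> intertwines D (g i.+1) (g i.+2) ->
  intertwines D (t i) (t i.+1) -> intertwines D (t i.+1) (t i.+2) ->
  intertwines D (t i.+2) (t i.+3) ->
  intertwines D (yh_r d g t i) (yh_r d g t i.+1).
Proof.
move=> *; apply: intertwines_sum => a _; apply: intertwines_sum => b _.
rewrite /yh_gblock; repeat first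
  [ apply: intertwinesM | apply: intertwinesD | apply: intertwinesX
  | apply: intertwines1 | assumption ].
Qed.

Section YokonumaHecke.
Variables (F : fieldType) (A : algType F) (d n : nat) (u : F) (g t : nat -> A).
Hypotheses (d_neq0 : d%:R != 0 :> F) (u_neq0 : u != 0).
Hypothesis YH : YH_relations d n u g t.

Lemma yh_g_left_inv j : (1 <= j < n)%N -> exists h, h * g j = 1.
Proof.
case: YH => _ _ tC td [_ _ _ gg] j_range.
exists (g j + (u^-1 - 1) *: (yh_e d t j + yh_e d t j * g j)).
apply: quadratic_left_inv => //; last by apply: gg; lia.
by apply: (yh_e_idem d_neq0); [apply: tC | apply: td | apply: td]; lia.
Qed.

Section Shift.
Variable i : nat.
Hypothesis i_range : (1 <= i /\ i.+3 <= n)%N.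
Let D := braid_shift g i.

Lemma braid_shift_intertwines_g :
  intertwines D (g i) (g i.+1) /\ intertwines D (g i.+1) (g i.+2).
Proof.
case: YH => gC braid _ _ _; rewrite /intertwines /D /braid_shift; split.
- rewrite !mulrA (gC i i.+2); try lia.
  by rewrite -!mulrA; congr (_ * _); rewrite !mulrA (braid i) //; lia.
- by rewrite !mulrA -(braid i.+1) -?mulrA ?(gC i i.+2) //; lia.
Qed.

Lemma braid_shift_intertwines_t : [/\ intertwines D (t i) (t i.+1),
  intertwines D (t i.+1) (t i.+2) & intertwines D (t i.+2) (t i.+3)].
Proof.
case: YH => _ _ _ _ [_ gt1 gtC _]; rewrite /intertwines /D /braid_shift.
split; rewrite !mulrA.
- rewrite -(gtC i.+2 i); try lia.
  rewrite -(mulrA _ (t i)) -(gtC i.+1 i); try lia.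
  by rewrite -!mulrA gt1 //; lia.
- rewrite -(gtC i.+2 i.+1); try lia.
  rewrite -(mulrA _ (t i.+1)) -gt1; try lia.
  by rewrite -!mulrA (gtC i i.+2) //; lia.
- rewrite -gt1; try lia.
  rewrite -(mulrA _ (t i.+3)) -(gtC i.+1 i.+3); try lia.
  by rewrite -!mulrA (gtC i i.+3) //; lia.
Qed.

Lemma braid_shift_left_inv : exists h, h * D = 1.
Proof.
have [h0 h0g] := yh_g_left_inv (j := i) ltac:(lia).
have [h1 h1g] := yh_g_left_inv (j := i.+1) ltac:(lia).
have [h2 h2g] := yh_g_left_inv (j := i.+2) ltac:(lia).
exists (h0 * h1 * h2); rewrite /D /braid_shift !mulrA.
by rewrite -(mulrA _ h2) h2g mulr1 -(mulrA _ h1) h1g mulr1 h0g.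
Qed.

Lemma yh_r_succ : yh_r d g t i = 0 -> yh_r d g t i.+1 = 0.
Proof.
move=> r0; have [h hD] := braid_shift_left_inv.
have [gi gi1] := braid_shift_intertwines_g.
have [ti ti1 ti2] := braid_shift_intertwines_t.
have := yh_r_intertwines d gi gi1 ti ti1 ti2; rewrite /intertwines r0 mul0r => Dr0.
by rewrite -[LHS]mul1r -hD -mulrA -Dr0 mulr0.
Qed.

End Shift.

Lemma yh_r_eq0_from_first :
  yh_r d g t 1 = 0 -> forall i, (1 <= i <= n - 2)%N -> yh_r d g t i = 0.
Proof.
move=> r1; elim=> [//|[//|i] IHi] /andP[_ i_le].
by apply: yh_r_succ; [lia | apply: IHi; lia].
Qed.

End YokonumaHecke.

Theorem corollary1 (d n : nat) (u : CC) :
  (1 <= d)%N -> (3 <= n)%N -> u != 0 ->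
  forall (A : algType CC) (g t : nat -> A),
    YH_relations d n u g t ->
    yh_r d g t 1 = 0 ->
    forall i, (1 <= i <= n - 2)%N -> yh_r d g t i = 0.
Proof.
move=> d_gt0 _ u_neq0 A g t YH.
apply: (yh_r_eq0_from_first _ u_neq0 YH).
by rewrite pnatr_eq0 -lt0n.
Qed.
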